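(* Let $n\in\mathbb{N}$, $H\in\mathbb{R}^{n\times n}$, $W\in\mathbb{R}^{n\times n}$ with $W\succ 0$, let $C=\mathrm{diag}(C_{11},\dots,C_{nn})$ be diagonal with all $C_{ii}\neq 0$, and let $V=\mathrm{diag}(\sigma_1^2,\dots,\sigma_n^2)$ with all $\sigma_i>0$. Assume $(H,C)$ is observable and $(H,D)$ is controllable, where $W=DD^T$. Let $\Sigma$ be the unique positive semidefinite solution of the discrete algebraic Riccati equation $$\Sigma = H\Sigma H^T - H\Sigma C^T(C\Sigma C^T+V)^{-1}C\Sigma H^T + W .$$ Then $$\mathrm{tr}\,W+\frac{\sigma_u^2\,\mathrm{tr}(H^TH)\,\lambda_n(W)}{\sigma_u^2+\lambda_n(W)C_u^2}\;\le\;\mathrm{tr}\,\Sigma\;\le\;\mathrm{tr}\,W+\frac{\sigma_l^2\,\mathrm{tr}(H^TH)}{C_l^2}.$$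
   Context: This models a linear system $x(k+1)=Hx(k)+w(k)$, $w(k)\sim\mathcal N(0,W)$, whose outputs $Cx(k)$ are privatized by adding Gaussian noise $v(k)\sim\mathcal N(0,V)$ before being processed by a steady-state Kalman filter; $\Sigma$ is the steady-state a priori error covariance, and $\mathrm{tr}\,\Sigma$ equals the steady-state mean squared prediction error. For a symmetric matrix $K$, $\lambda_n(K)\le\dots\le\lambda_1(K)$ denote its eigenvalues. Indices: $l:=\arg\min_{1\le i\le n} C_{ii}^2/\sigma_i^2$ and $u:=\arg\max_{1\le i\le n} C_{ii}^2/\sigma_i^2$; $C_l:=C_{ll}$, $C_u:=C_{uu}$, and $\sigma_l,\sigma_u$ are the corresponding $\sigma_i$. Thus $\lambda_n(C^TV^{-1}C)=C_l^2/\sigma_l^2$ and $\lambda_1(C^TV^{-1}C)=C_u^2/\sigma_u^2$. *)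

From HB Require Import structures.
From mathcomp Require Import all_boot all_order all_algebra.
Set Implicit Arguments. Unset Strict Implicit. Unset Printing Implicit Defensive.
Import Order.TTheory GRing.Theory Num.Theory.
Local Open Scope ring_scope.

Definition controllable (R : fieldType) (n m : nat)
  (H : 'M[R]_n) (D : 'M[R]_(n, m)) : bool :=
  \rank (\mxrow_(k < n) (H ^+ k *m D)) == n.

Definition observable (R : fieldType) (n p : nat)
  (H : 'M[R]_n) (C : 'M[R]_(p, n)) : bool :=
  \rank (\mxcol_(k < n) (C *m H ^+ k)) == n.

Definition posdef (R : numFieldType) (n : nat) (A : 'M[R]_n) : Prop :=
  A^T = A /\ forall x : 'cV[R]_n, x != 0 -> 0 < (x^T *m A *m x) 0 0.

Definition possemidef (R : numFieldType) (n : nat) (A : 'M[R]_n) : Prop :=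
  A^T = A /\ forall x : 'cV[R]_n, 0 <= (x^T *m A *m x) 0 0.

Definition is_min_eigenvalue (R : numFieldType) (n : nat) (A : 'M[R]_n) (lam : R)
  : Prop :=
  eigenvalue A lam /\ forall b, eigenvalue A b -> (lam <= b)%R.

From HB Require Import structures.
From mathcomp Require Import all_boot all_order all_algebra.
From mathcomp Require Import spectral sesquilinear complex.
From mathcomp.algebra_tactics Require Import ring lra.
Import Order.TTheory GRing.Theory Num.Theory.
Local Open Scope ring_scope.

(* Write P := Sigma - Sigma C^T (C Sigma C^T + V)^-1 C Sigma for the a posteriori covariance;
   the Riccati equation reads Sigma = H P H^T + W, so tr Sigma = tr W + tr (H P H^T) and it
   suffices to bound P between multiples of the identity.  Completing the square, for every
   gain K the matrix (1 - K C) Sigma (1 - K C)^T + K V K^T is P plus a positive semidefinite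
   term vanishing at the Kalman gain.  The gain K = C^-1 gives P <= C^-1 V C^-1, whose
   diagonal is at most sigma_l^2 / C_l^2.  At the Kalman gain, Sigma >= W >= lambda_n(W) I
   splits the quadratic form of P into one scalar quadratic per coordinate of K^T x, each of
   which is minimised explicitly; the worst coordinate is u. *)

Section QuadraticForm.
Context {R : comRingType} {n : nat}.

Definition qform (A : 'M[R]_n) (x : 'cV[R]_n) : R := (x^T *m A *m x) 0 0.

Lemma qformD A B x : qform (A + B) x = qform A x + qform B x.
Proof. by rewrite /qform mulmxDr mulmxDl mxE. Qed.

Lemma qform0 A : qform A 0 = 0.
Proof. by rewrite /qform mulmx0 mxE. Qed.

Lemma qform_conj (B A : 'M[R]_n) x : qform (B *m A *m B^T) x = qform A (B^T *m x).
Proof. by rewrite /qform trmx_mul trmxK !mulmxA. Qed.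

Lemma qform_diag_mx d x : qform (diag_mx d) x = \sum_i d 0 i * x i 0 ^+ 2.
Proof. by rewrite /qform mul_mx_diag mxE; apply: eq_bigr => i _; rewrite !mxE; ring. Qed.

Lemma qform_scalar_mx a x : qform a%:M x = a * \sum_i x i 0 ^+ 2.
Proof.
rewrite -diag_const_mx qform_diag_mx mulr_sumr.
by apply: eq_bigr => i _; rewrite mxE.
Qed.

Lemma mxtrace_conj_qform m (H : 'M[R]_(m, n)) A :
  \tr (H *m A *m H^T) = \sum_j qform A (row j H)^T.
Proof.
apply: eq_bigr => j _; rewrite /qform trmxK -row_mul !mxE.
by apply: eq_bigr => k _; rewrite !mxE.
Qed.

Lemma mxtrace_conj_scalar m (H : 'M[R]_(m, n)) a :
  \tr (H *m a%:M *m H^T) = a * \tr (H^T *m H).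
Proof. by rewrite mul_mx_scalar -scalemxAl mxtraceZ mxtrace_mulC. Qed.

End QuadraticForm.

Section QuadraticFormOrder.
Context {R : realFieldType} {n : nat}.
Implicit Types (A B : 'M[R]_n) (x : 'cV[R]_n) (d : 'rV[R]_n).

Lemma qform_diag_mx_gt0 d x : (forall i, 0 < d 0 i) -> x != 0 -> 0 < qform (diag_mx d) x.
Proof.
move=> d_gt0 x_neq0.
have terms_ge0 i : 0 <= d 0 i * x i 0 ^+ 2 := mulr_ge0 (ltW (d_gt0 i)) (sqr_ge0 _).
rewrite qform_diag_mx lt_def sumr_ge0 // andbT.
apply: contra x_neq0 => /eqP /psumr_eq0P sum0; apply/eqP/colP => i.
have /eqP := sum0 (fun i _ => terms_ge0 i) i isT.
by rewrite mulf_eq0 sqrf_eq0 (gt_eqF (d_gt0 i)) mxE => /eqP.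
Qed.

Lemma qform_diag_mx_le d b x : (forall i, d 0 i <= b) -> qform (diag_mx d) x <= qform b%:M x.
Proof.
move=> d_le; rewrite qform_diag_mx qform_scalar_mx mulr_sumr.
by apply: ler_sum => i _; rewrite ler_wpM2r ?sqr_ge0.
Qed.

Lemma addmx_psd_pd_unit A B :
  (forall x, 0 <= qform A x) -> (forall x, x != 0 -> 0 < qform B x) -> A + B \in unitmx.
Proof.
move=> A_psd B_pd; rewrite unitmxE unitfE; apply/negP => /det0P [v v_neq0 vAB].
have vT_neq0 : v^T != 0 by rewrite -(inj_eq (@trmx_inj _ _ _)) trmxK trmx0.
have := ltr_wpDl (A_psd v^T) (B_pd _ vT_neq0).
by rewrite -qformD /qform trmxK vAB mul0mx mxE ltxx.
Qed.

Lemma mxtrace_conj_le m (H : 'M[R]_(m, n)) A B :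
  (forall x, qform A x <= qform B x) -> \tr (H *m A *m H^T) <= \tr (H *m B *m H^T).
Proof. by move=> AB; rewrite !mxtrace_conj_qform; apply: ler_sum => j _. Qed.

End QuadraticFormOrder.

Local Open Scope sesquilinear_scope.

Section Spectral.
Context {C : numClosedFieldType} {n : nat} {A : 'M[C]_n}.
Hypothesis A_normal : A \is normalmx.

Local Notation P := (spectralmx A).
Local Notation d := (spectral_diag A).

Lemma diag_mx_formC (e : 'rV[C]_n) (y : 'cV[C]_n) :
  (y^t* *m diag_mx e *m y) 0 0 = \sum_i e 0 i * `|y i 0| ^+ 2.
Proof.
rewrite mul_mx_diag mxE; apply: eq_bigr => i _.
by rewrite !mxE normCKC; ring.
Qed.

Lemma spectral_formC (x : 'cV[C]_n) :
  (x^t* *m A *m x) 0 0 = ((P *m x)^t* *m diag_mx d *m (P *m x)) 0 0.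
Proof.
rewrite {1}(orthomx_spectralP A_normal) invmx_unitary ?spectral_unitarymx //.
by rewrite trmx_mul map_mxM !mulmxA.
Qed.

Lemma unitary_formC (x : 'cV[C]_n) :
  (x^t* *m x) 0 0 = ((P *m x)^t* *m (P *m x)) 0 0.
Proof.
have PtP : P^t* *m P = 1%:M.
  by rewrite -invmx_unitary ?spectral_unitarymx // mulVmx ?spectral_unit.
by rewrite trmx_mul map_mxM -mulmxA (mulmxA _ P) PtP mul1mx.
Qed.

Lemma spectral_mul : P *m A = diag_mx d *m P.
Proof.
rewrite [X in _ *m X](orthomx_spectralP A_normal) !mulmxA.
by rewrite mulmxV ?spectral_unit // mul1mx.
Qed.

Lemma eigenvalue_spectral_diag i : eigenvalue A (d 0 i).
Proof.
apply/eigenvalueP; exists (row i P).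
  by rewrite -row_mul spectral_mul row_mul row_diag_mx -scalemxAl -rowE.
apply/eqP => /(congr1 (mulmx^~ (P^t*))).
rewrite -row_mul (unitarymxP (spectral_unitarymx _)) mul0mx => /rowP /(_ i).
by rewrite !mxE eqxx => /eqP; rewrite oner_eq0.
Qed.

Lemma spectral_formC_ge (lam : C) : (forall i, lam <= d 0 i) ->
  forall x : 'cV[C]_n, lam * (x^t* *m x) 0 0 <= (x^t* *m A *m x) 0 0.
Proof.
move=> lam_le x; rewrite spectral_formC unitary_formC.
rewrite -[_ *m (P *m x)](congr1 (mulmx^~ _) (mulmx1 _)) -diag_const_mx.
rewrite !diag_mx_formC mulr_sumr; apply: ler_sum => i _.
by rewrite mxE mul1r ler_wpM2r // exprn_ge0.
Qed.
End Spectral.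

Lemma qform_ge_eigenvalue_lb {R : rcfType} {n} {W : 'M[R]_n} {lam : R} :
  W^T = W -> (forall b, eigenvalue W b -> lam <= b) ->
  forall x : 'cV[R]_n, lam * qform 1%:M x <= qform W x.
Proof.
move=> Wsym lam_lb x; rewrite /qform mulmx1.
pose f := real_complex R; pose Wc := map_mx f W.
have W_herm : Wc \is hermsymmx.
  rewrite is_hermitianmxE expr0 scale1r; apply/eqP/matrixP=> i j.
  by rewrite !mxE -[in LHS]Wsym mxE; exact/esym/conjc_real.
have d_real (i : 'I_n) : spectral_diag Wc 0 i \is Num.real.
  exact: mxOverP (hermitian_spectral_diag_real W_herm) 0 i.
have lam_le (i : 'I_n) : (lam%:C <= spectral_diag Wc 0 i)%C.
  rewrite -(RRe_real (d_real i)) lecR; apply: lam_lb.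
  have := eigenvalue_spectral_diag (hermitian_normalmx W_herm) i.
  by rewrite -[X in eigenvalue _ X](RRe_real (d_real i)) (eigenvalue_map f).
have := spectral_formC_ge (hermitian_normalmx W_herm) _ lam_le (map_mx f x).
have -> : (map_mx f x)^t* = map_mx f x^T.
  by apply/matrixP => i j; rewrite !mxE; exact: conjc_real.
by rewrite /Wc -!map_mxM ![(map_mx f _) 0 0]mxE -rmorphM lecR.
Qed.

Section KalmanUpdate.
Context {R : comUnitRingType} {n : nat}.
Implicit Types S C V K : 'M[R]_n.

Definition kalman_gain S C V := S *m C^T *m invmx (C *m S *m C^T + V).

Definition posterior_cov S C V := S - kalman_gain S C V *m C *m S.

Lemma posterior_cov_completion S C V K :
  S^T = S -> V^T = V -> C *m S *m C^T + V \in unitmx ->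
  (1%:M - K *m C) *m S *m (1%:M - K *m C)^T + K *m V *m K^T =
  posterior_cov S C V +
  (K - kalman_gain S C V) *m (C *m S *m C^T + V) *m (K - kalman_gain S C V)^T.
Proof.
move=> S_sym V_sym M_unit; set M := C *m S *m C^T + V in M_unit *.
set G := kalman_gain S C V.
have M_sym : M^T = M by rewrite /M linearD /= V_sym !trmx_mul trmxK S_sym mulmxA.
have GM : G *m M = S *m C^T by rewrite /G /kalman_gain -mulmxA mulVmx ?mulmx1.
have MGT : M *m G^T = C *m S.
  by rewrite -[LHS]trmxK trmx_mul trmxK M_sym GM trmx_mul trmxK S_sym.
have -> : (1%:M - K *m C) *m S *m (1%:M - K *m C)^T + K *m V *m K^T =
    S - K *m (C *m S) - S *m C^T *m K^T + K *m M *m K^T.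
  rewrite linearB /= trmx1 trmx_mul mulmxBl mul1mx mulmxBr mulmx1 mulmxBl.
  rewrite /M mulmxDr mulmxDl !mulmxA.
  (* Entrywise the matrix products stay opaque sums, so [ring] only rearranges them. *)
  by apply/matrixP => i j; rewrite !mxE; ring.
have -> : (K - G) *m M *m (K - G)^T =
    K *m M *m K^T - K *m (C *m S) - S *m C^T *m K^T + G *m C *m S.
  rewrite linearB /= !mulmxBl !mulmxBr -!mulmxA MGT !mulmxA GM.
  by apply/matrixP => i j; rewrite !mxE; ring.
rewrite /posterior_cov -/G.
by apply/matrixP => i j; rewrite !mxE; ring.
Qed.

End KalmanUpdate.

Section PosteriorCovBounds.
Context {R : realFieldType} {n : nat} {S C V : 'M[R]_n}.
Hypotheses (S_sym : S^T = S) (V_sym : V^T = V).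
Hypothesis S_psd : forall x, 0 <= qform S x.
Hypothesis V_pd : forall x, x != 0 -> 0 < qform V x.

Let V_psd x : 0 <= qform V x.
Proof. by have [->|/V_pd/ltW//] := eqVneq x 0; rewrite qform0. Qed.

Lemma innovation_cov_unit : C *m S *m C^T + V \in unitmx.
Proof. by apply: addmx_psd_pd_unit V_pd => x; rewrite qform_conj; exact: S_psd. Qed.

Lemma qform_posterior_cov K x :
  qform (posterior_cov S C V) x =
  qform S ((1%:M - K *m C)^T *m x) + qform V (K^T *m x)
  - qform (C *m S *m C^T + V) ((K - kalman_gain S C V)^T *m x).
Proof.
rewrite -!qform_conj -qformD posterior_cov_completion ?innovation_cov_unit //.
by rewrite [in RHS]qformD addrK.
Qed.

Lemma qform_posterior_cov_le K x :
  qform (posterior_cov S C V) x <=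
  qform S ((1%:M - K *m C)^T *m x) + qform V (K^T *m x).
Proof.
rewrite (qform_posterior_cov K) gerBl qformD qform_conj.
exact: addr_ge0 (S_psd _) (V_psd _).
Qed.

Lemma qform_posterior_cov_gain x :
  qform (posterior_cov S C V) x =
  qform S ((1%:M - kalman_gain S C V *m C)^T *m x) + qform V ((kalman_gain S C V)^T *m x).
Proof.
by rewrite (qform_posterior_cov (kalman_gain S C V)) subrr trmx0 mul0mx qform0 subr0.
Qed.

Lemma posterior_cov_psd x : 0 <= qform (posterior_cov S C V) x.
Proof. by rewrite qform_posterior_cov_gain; exact: addr_ge0 (S_psd _) (V_psd _). Qed.

End PosteriorCovBounds.

Section Scalar.
Context {R : realFieldType}.
Implicit Types lam s c x z : R.

(* The left-hand side is the minimum over [z] of the right-hand side. *)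
Lemma quad_infimum_le lam s c x z : 0 <= lam -> 0 < s ->
  lam * s / (s + lam * c ^+ 2) * x ^+ 2 <= lam * (x - c * z) ^+ 2 + s * z ^+ 2.
Proof.
move=> lam_ge0 s_gt0.
have den_gt0 := ltr_wpDr (mulr_ge0 lam_ge0 (sqr_ge0 c)) s_gt0.
rewrite mulrAC ler_pdivrMr //.
have := sqr_ge0 (lam * c * x - (s + lam * c ^+ 2) * z).
nra.
Qed.

Lemma weight_le_of_ratio_le lam s c s' c' : 0 <= lam -> 0 < s -> 0 < s' ->
  c ^+ 2 / s <= c' ^+ 2 / s' ->
  lam * s' / (s' + lam * c' ^+ 2) <= lam * s / (s + lam * c ^+ 2).
Proof.
move=> lam_ge0 s_gt0 s'_gt0 ratio_le.
have den_gt0 := ltr_wpDr (mulr_ge0 lam_ge0 (sqr_ge0 c)) s_gt0.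
have den'_gt0 := ltr_wpDr (mulr_ge0 lam_ge0 (sqr_ge0 c')) s'_gt0.
rewrite ler_pdivrMr // mulrAC ler_pdivlMr //.
rewrite ler_pdivrMr // mulrAC ler_pdivlMr // in ratio_le.
nra.
Qed.

Lemma sqr_ratio_inv_le (a b a' b' : R) : a != 0 -> b != 0 -> a' != 0 -> b' != 0 ->
  a ^+ 2 / b ^+ 2 <= a' ^+ 2 / b' ^+ 2 -> b' ^+ 2 / a' ^+ 2 <= b ^+ 2 / a ^+ 2.
Proof.
move=> *; rewrite -lef_pV2 ?invf_div // posrE divr_gt0 // exprn_even_gt0 //.
Qed.
End Scalar.

Section DiagonalMeasurement.
Context {R : realFieldType} {n : nat} {c sig : 'I_n -> R} {S : 'M[R]_n}.
Hypotheses (c_neq0 : forall i, c i != 0) (sig_gt0 : forall i, 0 < sig i).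
Hypotheses (S_sym : S^T = S) (S_psd : forall x, 0 <= qform S x).

Local Notation C := (diag_mx (\row_i c i)).
Local Notation V := (diag_mx (\row_i sig i ^+ 2)).

Let V_pd x : x != 0 -> 0 < qform V x.
Proof. by apply: qform_diag_mx_gt0 => i; rewrite mxE exprn_gt0. Qed.

Let V_sym : V^T = V. Proof. exact: tr_diag_mx. Qed.

Lemma posterior_cov_le_scalar (l : 'I_n) :
  (forall i, c l ^+ 2 / sig l ^+ 2 <= c i ^+ 2 / sig i ^+ 2) ->
  forall x, qform (posterior_cov S C V) x <= qform (sig l ^+ 2 / c l ^+ 2)%:M x.
Proof.
move=> l_min x; pose Ci := diag_mx (\row_i (c i)^-1).
have CiC : Ci *m C = 1%:M.
  rewrite mulmx_diag -diag_const_mx; congr diag_mx.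
  by apply/rowP => i; rewrite !mxE mulVf.
apply: le_trans (qform_posterior_cov_le S_sym V_sym S_psd V_pd Ci x) _.
rewrite CiC subrr trmx0 mul0mx qform0 add0r -qform_conj tr_diag_mx !mulmx_diag.
apply: qform_diag_mx_le => i; rewrite !mxE.
rewrite (_ : _ * _ * _ = sig i ^+ 2 / c i ^+ 2); last by rewrite -exprVn; ring.
by apply: sqr_ratio_inv_le (l_min i); rewrite ?c_neq0 ?lt0r_neq0.
Qed.

Lemma posterior_cov_ge_scalar (u : 'I_n) (lam : R) : 0 <= lam ->
  (forall i, c i ^+ 2 / sig i ^+ 2 <= c u ^+ 2 / sig u ^+ 2) ->
  (forall x, lam * qform 1%:M x <= qform S x) ->
  forall x, qform (lam * sig u ^+ 2 / (sig u ^+ 2 + lam * c u ^+ 2))%:M x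
            <= qform (posterior_cov S C V) x.
Proof.
move=> lam_ge0 u_max S_ge x.
rewrite (qform_posterior_cov_gain (C := C) S_sym V_sym S_psd V_pd).
set z := (kalman_gain S C V)^T *m x.
have -> : (1%:M - kalman_gain S C V *m C)^T *m x = x - C *m z.
  by rewrite linearB /= trmx1 trmx_mul tr_diag_mx mulmxBl mul1mx mulmxA.
clearbody z; apply: le_trans (lerD (S_ge _) (lexx _)).
rewrite !qform_scalar_mx qform_diag_mx mul1r !mulr_sumr -big_split /=.
apply: ler_sum => i _; rewrite mul_diag_mx !mxE.
apply: le_trans (quad_infimum_le _ _ _ _ _ lam_ge0 (exprn_gt0 2 (sig_gt0 i))).
rewrite ler_wpM2r ?sqr_ge0 //.
exact: weight_le_of_ratio_le lam_ge0 (exprn_gt0 _ (sig_gt0 i)) (exprn_gt0 _ (sig_gt0 u))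
  (u_max i).
Qed.

End DiagonalMeasurement.

Lemma posdef_eigenvalue_gt0 {R : realFieldType} {n} {A : 'M[R]_n} {a : R} :
  posdef A -> eigenvalue A a -> 0 < a.
Proof.
move=> [_ A_pd] /eigenvalueP [v vA v_neq0].
have vT_neq0 : v^T != 0 by rewrite -(inj_eq (@trmx_inj _ _ _)) trmxK trmx0.
have vv_gt0 : 0 < qform 1%:M v^T.
  by rewrite -diag_const_mx qform_diag_mx_gt0 // => i; rewrite mxE ltr01.
have := A_pd _ vT_neq0; rewrite trmxK vA -scalemxAl mxE.
by rewrite /qform trmxK mulmx1 in vv_gt0; rewrite pmulr_lgt0.
Qed.

Theorem theorem1 (R : rcfType) (n m : nat) (Hn : (0 < n)%N)
  (H W C V Sigma : 'M[R]_n) (D : 'M[R]_(n, m)) (sig : 'I_n -> R)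
  (lam : R) (l u : 'I_n) :
  posdef W -> W = D *m D^T ->
  is_diag_mx C -> (forall i, C i i != 0) ->
  (forall i, 0 < sig i) -> V = diag_mx (\row_i (sig i ^+ 2)) ->
  observable H C -> controllable H D ->
  possemidef Sigma ->
  Sigma = H *m Sigma *m H^T
          - H *m Sigma *m C^T *m invmx (C *m Sigma *m C^T + V) *m C *m Sigma *m H^T
          + W ->
  is_min_eigenvalue W lam ->
  (forall i, C l l ^+ 2 / sig l ^+ 2 <= C i i ^+ 2 / sig i ^+ 2) ->
  (forall i, C i i ^+ 2 / sig i ^+ 2 <= C u u ^+ 2 / sig u ^+ 2) ->
  \tr W + sig u ^+ 2 * \tr (H^T *m H) * lam / (sig u ^+ 2 + lam * C u u ^+ 2)
    <= \tr Sigma /\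
  \tr Sigma <= \tr W + sig l ^+ 2 * \tr (H^T *m H) / C l l ^+ 2.
Proof.
move=> W_pd _ C_diag C_neq0 sig_gt0 -> _ _ [S_sym S_psd] dare [lam_eig lam_min] l_min u_max.
have C_eq : C = diag_mx (\row_i C i i).
  apply/matrixP => i j; rewrite !mxE; have [<-|ij] := eqVneq i j; first by rewrite mulr1n.
  by rewrite mulr0n (is_diag_mxP C_diag).
rewrite C_eq in dare.
set P := posterior_cov Sigma (diag_mx (\row_i C i i)) (diag_mx (\row_i sig i ^+ 2)).
have S_eq : Sigma = H *m P *m H^T + W.
  by rewrite {1}dare /P /posterior_cov /kalman_gain mulmxBr mulmxBl !mulmxA.
have V_pd x : x != 0 -> 0 < qform (diag_mx (\row_i sig i ^+ 2)) x.
  by apply: qform_diag_mx_gt0 => i; rewrite mxE exprn_gt0.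
have lam_ge0 : 0 <= lam := ltW (posdef_eigenvalue_gt0 W_pd lam_eig).
have S_ge x : lam * qform 1%:M x <= qform Sigma x.
  apply: le_trans (qform_ge_eigenvalue_lb (proj1 W_pd) lam_min x) _.
  by rewrite S_eq qformD qform_conj lerDr (posterior_cov_psd S_sym (tr_diag_mx _) S_psd V_pd).
rewrite {1 2}S_eq mxtraceD (addrC (\tr (H *m P *m H^T))); split; rewrite lerD2l.
  rewrite [leLHS](_ : _ = lam * sig u ^+ 2 / (sig u ^+ 2 + lam * C u u ^+ 2)
                          * \tr (H^T *m H)); last by ring.
  rewrite -mxtrace_conj_scalar; apply: mxtrace_conj_le.
  exact: (posterior_cov_ge_scalar sig_gt0 S_sym S_psd u lam lam_ge0 u_max S_ge).
rewrite [leRHS](_ : _ = sig l ^+ 2 / C l l ^+ 2 * \tr (H^T *m H)); last by ring.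
rewrite -mxtrace_conj_scalar; apply: mxtrace_conj_le.
exact: (posterior_cov_le_scalar C_neq0 sig_gt0 S_sym S_psd l l_min).
Qed.
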